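(* Let $i,m\in[1,M]$ be black vertices and $j,n\in[1,N]$ white vertices, and define $a$ by $\#\{i,j,m,n\}=4-a$. Let $(k,\ell),(p,q)$ be two further black–white pairs and define $b$ by $\#\{i,j,m,n,k,\ell,p,q\}=8-b$. Then $$\mathbb E[A_{ij}A_{mn}]=O\Big(\frac{d_b}N\Big)^{2-\lfloor a/2\rfloor},\qquad \mathbb E[A_{ij}A_{mn}A_{k\ell}A_{pq}]=O\Big(\frac{d_b}N\Big)^{4-\lfloor b/2\rfloor}.$$
   Context: Let $M\ge N$, $\alpha=M/N\ge1$ fixed, $N\to\infty$; $d_b,d_w$ positive integers with $Md_b=Nd_w$, $N^{c_0}\le d_b\le N^{2/3-c_0}$ for a fixed $c_0>0$. $A\in\{0,1\}^{M\times N}$ is the biadjacency matrix of a bipartite graph drawn uniformly at random from the set of bipartite graphs with $M$ black vertices of degree $d_b$ and $N$ white vertices of degree $d_w$; $A_{xy}=1$ iff black vertex $x$ is adjacent to white vertex $y$. Black and white vertices are distinct labels, so $\#\{\cdot\}$ counts distinct vertices. The expectation is under the uniform measure and implicit constants do not depend on $N$ or the indices. *)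

From mathcomp Require Import all_boot all_order all_algebra.
From mathcomp Require Import all_classical all_reals all_analysis.
Set Implicit Arguments. Unset Strict Implicit. Unset Printing Implicit Defensive.
Import Order.TTheory GRing.Theory Num.Theory.
Local Open Scope ring_scope.

(* A : 'M[bool]_(M,N) is the biadjacency matrix of a bipartite graph with
   M black vertices (rows) and N white vertices (columns); A x y = true iff
   black x is adjacent to white y. *)
Definition biregular (M N db dw : nat) (A : 'M[bool]_(M, N)) : bool :=
  [forall x : 'I_M, #|[set y : 'I_N | A x y]| == db] &&
  [forall y : 'I_N, #|[set x : 'I_M | A x y]| == dw].

Definition biregSet (M N db dw : nat) : {set 'M[bool]_(M, N)} :=
  [set A | biregular db dw A].

Definition Ebireg {R : realType} (M N db dw : nat) (f : 'M[bool]_(M, N) -> R) : R :=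
  (\sum_(A in biregSet M N db dw) f A) / (#|biregSet M N db dw|)%:R.

Definition ent {R : realType} (M N : nat) (A : 'M[bool]_(M, N)) (x : 'I_M) (y : 'I_N) : R :=
  (A x y : nat)%:R.

From mathcomp Require Import all_boot all_order all_algebra.
From mathcomp Require Import all_classical all_reals all_analysis.
From mathcomp Require Import fingroup perm zify.
Import Order.TTheory GRing.Theory Num.Theory.
Local Open Scope ring_scope.
Set Implicit Arguments. Unset Strict Implicit. Unset Printing Implicit Defensive.

(* Let Y be the product of the entries of A along a list of edges and S(Y) its
   sum over all biregular graphs.  If an edge (x, y) has a black endpoint x met by
   no earlier edge, then swapping x with any other such black vertex x' is a
   bijection of the biregular graphs fixing the earlier entries, so S(A_xy Y) does
   not depend on x'.  Summing over x' and using that column y contains d_w ones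
   gives S(A_xy Y) <= d_w / (M - O(1)) S(Y) = O(d_b / N) S(Y), as M d_b = N d_w;
   a new white endpoint is handled with row sums.  So every edge bringing a new
   vertex costs a factor O(d_b / N), and edges spanning v distinct vertices
   contain at least v / 2 such edges. *)

Section Relabelling.
Variables (M N db dw : nat).

Definition relabel (s : {perm 'I_M}) (p : {perm 'I_N}) (A : 'M[bool]_(M, N)) :
  'M[bool]_(M, N) := \matrix_(x, y) A (s x) (p y).

Lemma relabelK s p : cancel (relabel s p) (relabel (s^-1)%g (p^-1)%g).
Proof. by move=> A; apply/matrixP=> x y; rewrite !mxE !permKV. Qed.

Lemma biregular_relabel s p A :
  biregular db dw (relabel s p A) = biregular db dw A.
Proof.
suff relabelW s' p' B : biregular db dw B -> biregular db dw (relabel s' p' B).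
  by apply/idP/idP=> [/(relabelW (s^-1)%g (p^-1)%g)|]; rewrite ?relabelK //; apply: relabelW.
case/andP=> /forallP rows /forallP cols; apply/andP; split; apply/forallP.
- move=> x; have -> : [set y | relabel s' p' B x y] = p' @^-1: [set y | B (s' x) y].
    by apply/setP=> y; rewrite !inE mxE.
  by rewrite card_preimset //; exact: perm_inj.
- move=> y; have -> : [set x | relabel s' p' B x y] = s' @^-1: [set x | B x (p' y)].
    by apply/setP=> x; rewrite !inE mxE.
  by rewrite card_preimset //; exact: perm_inj.
Qed.

Lemma sum_biregSet_relabel (V : nmodType) s p (f : 'M[bool]_(M, N) -> V) :
  \sum_(A in biregSet M N db dw) f (relabel s p A) = \sum_(A in biregSet M N db dw) f A.
Proof.
rewrite [RHS](reindex_inj (can_inj (relabelK s p))); apply: eq_bigl => A.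
by rewrite !inE biregular_relabel.
Qed.

End Relabelling.

Lemma exchangeable_sum_le (R : numDomainType) (T U : finType) (D : {pred U})
    (F : {set T}) (g : T -> U -> R) (h : U -> R) (d : R) x :
  (forall x', x' \in F -> \sum_(A in D) g x' A = \sum_(A in D) g x A) ->
  (forall A, A \in D -> \sum_(x' in F) g x' A <= d * h A) ->
  #|F|%:R * \sum_(A in D) g x A <= d * \sum_(A in D) h A.
Proof.
move=> gF ghd; rewrite mulr_natl -sumr_const -(eq_bigr _ gF) exchange_big mulr_sumr /=.
exact: ler_sum.
Qed.

Section EdgeProducts.
Variables (R : realType) (M N db dw : nat).
Implicit Types (es : seq ('I_M * 'I_N)) (A : 'M[bool]_(M, N)).

Definition ent_prod es A : R := \prod_(e <- es) ent A e.1 e.2.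

Definition blacks es : {set 'I_M} := [set:: map fst es].
Definition whites es : {set 'I_N} := [set:: map snd es].

Lemma ent_ge0 A x y : 0 <= ent A x y :> R.
Proof. exact: ler0n. Qed.

Lemma ent_le1 A x y : ent A x y <= 1 :> R.
Proof. by rewrite /ent; case: (A x y). Qed.

Lemma ent_prod_cons e es A : ent_prod (e :: es) A = ent A e.1 e.2 * ent_prod es A.
Proof. exact: big_cons. Qed.

Lemma ent_prod_ge0 es A : 0 <= ent_prod es A.
Proof. by apply: prodr_ge0 => e _; apply: ent_ge0. Qed.

Lemma ent_prod_relabel es (s : {perm 'I_M}) (p : {perm 'I_N}) A :
  {in blacks es, s =1 id} -> {in whites es, p =1 id} ->
  ent_prod es (relabel s p A) = ent_prod es A.
Proof.
move=> sB pW; rewrite /ent_prod !big_seq; apply: eq_bigr => e e_es.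
rewrite /ent mxE sB ?pW // inE; exact: map_f.
Qed.

Lemma sum_ent_col_le A (y : 'I_N) (F : {set 'I_M}) :
  A \in biregSet M N db dw -> \sum_(x in F) ent A x y <= dw%:R :> R.
Proof.
rewrite inE => /andP [_ /forallP /(_ y) /eqP <-].
have -> : #|[set x | A x y]|%:R = \sum_x ent A x y :> R.
  rewrite /ent -natr_sum -sum1dep_card big_mkcond.
  by congr _%:R; apply: eq_bigr => x _; case: (A x y).
by rewrite [X in _ <= X](bigID (mem F)) /= lerDl; apply: sumr_ge0 => x _; apply: ent_ge0.
Qed.

Lemma sum_ent_row_le A (x : 'I_M) (F : {set 'I_N}) :
  A \in biregSet M N db dw -> \sum_(y in F) ent A x y <= db%:R :> R.
Proof.
rewrite inE => /andP [/forallP /(_ x) /eqP <- _].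
have -> : #|[set y | A x y]|%:R = \sum_y ent A x y :> R.
  rewrite /ent -natr_sum -sum1dep_card big_mkcond.
  by congr _%:R; apply: eq_bigr => y _; case: (A x y).
by rewrite [X in _ <= X](bigID (mem F)) /= lerDl; apply: sumr_ge0 => y _; apply: ent_ge0.
Qed.

Lemma sum_ent_black_le es x y : x \notin blacks es ->
  \sum_(A in biregSet M N db dw) ent A x y * ent_prod es A
    <= dw%:R / #|~: blacks es|%:R * \sum_(A in biregSet M N db dw) ent_prod es A.
Proof.
move=> xB; have xC : x \in ~: blacks es by rewrite inE.
have n_gt0 : (0 : R) < #|~: blacks es|%:R by rewrite ltr0n; apply/card_gt0P; exists x.
rewrite mulrAC ler_pdivlMr // mulrC.
apply: (exchangeable_sum_le (g := fun x' A => ent A x' y * ent_prod es A)).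
- move=> x'; rewrite inE => x'B.
  rewrite -(sum_biregSet_relabel db dw (tperm x x') 1); apply: eq_bigr => A _.
  rewrite /= {1}/ent mxE tpermR perm1 ent_prod_relabel // => [z zB|z _].
  + by rewrite tpermD //; [apply: contraNneq xB => -> | apply: contraNneq x'B => ->].
  + by rewrite perm1.
- by move=> A AD; rewrite -mulr_suml ler_wpM2r ?ent_prod_ge0 ?sum_ent_col_le.
Qed.

Lemma sum_ent_white_le es x y : y \notin whites es ->
  \sum_(A in biregSet M N db dw) ent A x y * ent_prod es A
    <= db%:R / #|~: whites es|%:R * \sum_(A in biregSet M N db dw) ent_prod es A.
Proof.
move=> yW; have yC : y \in ~: whites es by rewrite inE.
have n_gt0 : (0 : R) < #|~: whites es|%:R by rewrite ltr0n; apply/card_gt0P; exists y.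
rewrite mulrAC ler_pdivlMr // mulrC.
apply: (exchangeable_sum_le (g := fun y' A => ent A x y' * ent_prod es A)).
- move=> y'; rewrite inE => y'W.
  rewrite -(sum_biregSet_relabel db dw 1 (tperm y y')); apply: eq_bigr => A _.
  rewrite /= {1}/ent mxE tpermR perm1 ent_prod_relabel // => [z _|z zW].
  + by rewrite perm1.
  + by rewrite tpermD //; [apply: contraNneq yW => -> | apply: contraNneq y'W => ->].
- by move=> A AD; rewrite -mulr_suml ler_wpM2r ?ent_prod_ge0 ?sum_ent_row_le.
Qed.

End EdgeProducts.

Section FreshEdges.
Variables (M N : nat).
Implicit Types (es : seq ('I_M * 'I_N)).

Fixpoint fresh_edges es : nat :=
  if es is e :: es' then
    (fresh_edges es' + ((e.1 \notin blacks es') || (e.2 \notin whites es')))%N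
  else 0%N.

Lemma blacks_cons e es : blacks (e :: es) = e.1 |: blacks es.
Proof. exact: set_cons. Qed.

Lemma whites_cons e es : whites (e :: es) = e.2 |: whites es.
Proof. exact: set_cons. Qed.

Lemma card_blacks_le es : (#|blacks es| <= size es)%N.
Proof. by rewrite cardsE -(size_map fst); apply: card_size. Qed.

Lemma card_whites_le es : (#|whites es| <= size es)%N.
Proof. by rewrite cardsE -(size_map snd); apply: card_size. Qed.

Lemma fresh_edges_le es : (fresh_edges es <= size es)%N.
Proof. by elim: es => //= e es IH; case: (_ || _); rewrite /=; lia. Qed.

Lemma card_blacks_whites_le es : (#|blacks es| + #|whites es| <= 2 * fresh_edges es)%N.
Proof.
elim: es => [|e es IH] /=; first by rewrite /blacks /whites /= !finset.set_nil !cards0.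
rewrite blacks_cons whites_cons !cardsU1.
move: IH; set b := #|blacks es|; set w := #|whites es|.
by case: (e.1 \in blacks es); case: (e.2 \in whites es); rewrite /=; lia.
Qed.

Lemma exponent_le_fresh_edges es :
  (size es - (2 * size es - (#|blacks es| + #|whites es|))./2 <= fresh_edges es)%N.
Proof.
have := card_blacks_whites_le es; have := fresh_edges_le es.
rewrite -divn2; lia.
Qed.

End FreshEdges.

Lemma ler_natr_ratio (R : numFieldType) (a n b m k : nat) :
  (0 < m)%N -> (a * m <= k * b * n)%N -> a%:R / n%:R <= k%:R * (b%:R / m%:R) :> R.
Proof.
move=> m_gt0 abmn; have [->|n_gt0] := posnP n.
  by rewrite invr0 mulr0 mulr_ge0 ?divr_ge0.
rewrite mulrA ler_pdivrMr ?ltr0n // mulrAC.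
by rewrite ler_pdivlMr ?ltr0n // -!natrM ler_nat.
Qed.

Section EdgeProductBound.
Variables (R : realType) (M N db dw : nat).
Implicit Types (es : seq ('I_M * 'I_N)).
Hypothesis degree_sum : (M * db = N * dw)%N.

Lemma sum_ent_prod_le (k L : nat) es :
  (size es <= L)%N -> (M <= k * (M - L))%N -> (N <= k * (N - L))%N ->
  \sum_(A in biregSet M N db dw) ent_prod R es A
    <= (k%:R * (db%:R / N%:R)) ^+ fresh_edges es * #|biregSet M N db dw|%:R.
Proof.
move=> + M_room N_room; elim: es => [_|e es IH /= es_le].
  by rewrite /ent_prod (eq_bigr (fun _ => 1)) => [|A _]; rewrite ?big_nil ?sumr_const ?mul1r.
have {IH} := IH (ltnW es_le).
set T := \sum_(A in _) _; move=> T_le.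
set x := k%:R * (db%:R / N%:R).
have x_ge0 : 0 <= x by rewrite mulr_ge0 ?divr_ge0 ?ler0n.
under eq_bigr do rewrite ent_prod_cons.
have N_gt0 : (0 < N)%N := leq_ltn_trans (leq0n _) (ltn_ord e.2).
have fresh_step : \sum_(A in biregSet M N db dw) ent A e.1 e.2 * ent_prod R es A <= x * T ->
    \sum_(A in biregSet M N db dw) ent A e.1 e.2 * ent_prod R es A
      <= x ^+ (fresh_edges es + 1) * #|biregSet M N db dw|%:R.
  by move=> /le_trans; apply; rewrite addn1 exprS -mulrA ler_wpM2l.
case: (boolP (e.1 \in blacks es)) => [e1B | e1B]; last first.
  apply: fresh_step; apply: le_trans (sum_ent_black_le R db dw e.2 e1B) _.
  apply: ler_wpM2r; first by apply: sumr_ge0 => A _; apply: ent_prod_ge0.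
  apply: ler_natr_ratio => //; rewrite mulnC -degree_sum mulnAC leq_mul2r.
  apply/orP; right; apply: leq_trans M_room _; rewrite leq_mul2l cardsCs finset.setCK card_ord.
  by have := card_blacks_le es; lia.
case: (boolP (e.2 \in whites es)) => [e2W | e2W]; last first.
  apply: fresh_step; apply: le_trans (sum_ent_white_le R db dw e.1 e2W) _.
  apply: ler_wpM2r; first by apply: sumr_ge0 => A _; apply: ent_prod_ge0.
  apply: ler_natr_ratio => //; rewrite mulnC mulnAC leq_mul2r.
  apply/orP; right; apply: leq_trans N_room _; rewrite leq_mul2l cardsCs finset.setCK card_ord.
  by have := card_whites_le es; lia.
rewrite addn0; apply: le_trans T_le; apply: ler_sum => A _.
by rewrite ler_piMl ?ent_prod_ge0 ?ent_le1.
Qed.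

Lemma biregSet_db_le A : (0 < M)%N -> A \in biregSet M N db dw -> (db <= N)%N.
Proof.
move=> M_gt0; rewrite inE => /andP [/forallP /(_ (Ordinal M_gt0)) /eqP <- _].
by rewrite -[X in (_ <= X)%N]card_ord max_card.
Qed.

Lemma Ebireg_ent_prod_le (k L K : nat) es :
  (0 < M)%N -> (0 < k)%N ->
  (size es <= L)%N -> (M <= k * (M - L))%N -> (N <= k * (N - L))%N ->
  (K <= fresh_edges es)%N ->
  Ebireg db dw (ent_prod R es) <= k%:R ^+ L * (db%:R / N%:R) ^+ K.
Proof.
move=> M_gt0 k_gt0 es_le M_room N_room K_le; rewrite /Ebireg.
have [->|set_gt0] := posnP #|biregSet M N db dw|.
  by rewrite invr0 mulr0 mulr_ge0 ?exprn_ge0 ?divr_ge0.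
have [A0 A0_in] := card_gt0P set_gt0.
have ratio_le1 : db%:R / N%:R <= 1 :> R.
  have [->|N_gt0] := posnP N; first by rewrite invr0 mulr0 ler01.
  by rewrite ler_pdivrMr ?ltr0n // mul1r ler_nat (biregSet_db_le M_gt0 A0_in).
rewrite ler_pdivrMr ?ltr0n //.
apply: le_trans (sum_ent_prod_le es_le M_room N_room) _.
rewrite ler_wpM2r // exprMn ler_pM ?exprn_ge0 ?divr_ge0 //.
- by rewrite ler_weXn2l ?ler1n // (leq_trans (fresh_edges_le es)).
- by rewrite ler_wiXn2l ?divr_ge0.
Qed.

Lemma Ebireg_ent_prod_le_exponent es :
  (8 <= M)%N -> (8 <= N)%N -> (size es <= 4)%N ->
  Ebireg db dw (ent_prod R es)
    <= 2 ^+ 4 * (db%:R / N%:R) ^+ (size es - (2 * size es - (#|blacks es| + #|whites es|))./2).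
Proof.
move=> M_ge8 N_ge8 es_le; apply: (@Ebireg_ent_prod_le 2 4) => //; try lia.
exact: exponent_le_fresh_edges.
Qed.

End EdgeProductBound.

Theorem mainTheorem10 (R : realType) (alpha c0 : R) :
  1 <= alpha -> 0 < c0 ->
  exists C : R, exists N0 : nat,
  forall (M N db dw : nat),
    (N0 <= N)%N ->
    M%:R = alpha * N%:R ->
    (M * db = N * dw)%N ->
    (0 < db)%N -> (0 < dw)%N ->
    N%:R `^ c0 <= db%:R ->
    db%:R <= N%:R `^ (2 / 3 - c0) ->
    (forall (i m : 'I_M) (j n : 'I_N),
       let a := (4 - (#|[set i; m]| + #|[set j; n]|))%N in
       @Ebireg R M N db dw (fun A => ent A i j * ent A m n)
         <= C * (db%:R / N%:R) ^+ (2 - a./2)) /\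
    (forall (i m k p : 'I_M) (j n l q : 'I_N),
       let b := (8 - (#|[set i; m; k; p]| + #|[set j; n; l; q]|))%N in
       @Ebireg R M N db dw (fun A => ent A i j * ent A m n * ent A k l * ent A p q)
         <= C * (db%:R / N%:R) ^+ (4 - b./2)).
Proof.
move=> alpha_ge1 _; exists (2 ^+ 4), 8%N => M N db dw N_ge8 M_eq degree_sum _ _ _ _.
have M_ge8 : (8 <= M)%N.
  by apply: leq_trans N_ge8 _; rewrite -(ler_nat R) M_eq ler_peMl.
split=> [i m j n | i m k p j n l q] /=.
- have -> : (fun A => ent A i j * ent A m n) = ent_prod R [:: (i, j); (m, n)].
    by apply/funext=> A; rewrite /ent_prod !big_cons big_nil mulr1.
  have -> : [set i; m] = blacks [:: (i, j); (m, n)] by apply/setP=> z; rewrite !inE.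
  have -> : [set j; n] = whites [:: (i, j); (m, n)] by apply/setP=> z; rewrite !inE.
  exact: Ebireg_ent_prod_le_exponent.
- have -> : (fun A => ent A i j * ent A m n * ent A k l * ent A p q)
      = ent_prod R [:: (i, j); (m, n); (k, l); (p, q)].
    by apply/funext=> A; rewrite /ent_prod !big_cons big_nil mulr1 !mulrA.
  have -> : [set i; m; k; p] = blacks [:: (i, j); (m, n); (k, l); (p, q)].
    by apply/setP=> z; rewrite !inE -!orbA.
  have -> : [set j; n; l; q] = whites [:: (i, j); (m, n); (k, l); (p, q)].
    by apply/setP=> z; rewrite !inE -!orbA.
  exact: Ebireg_ent_prod_le_exponent.
Qed.
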